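(* Let $x\in X$ with ${\cal E}_J(x)=\emptyset$. Then for every sequence $(x^{(k)})_{k\in\mathbb N}$ in $X$ converging to $x$ and every $i\in I$, $\rho_i(x^{(k)})\to\rho_i(x)$ (where, if $\rho_i(x)=-\infty$, this means $\rho_i(x^{(k)})=-\infty$ for all sufficiently large $k$). Equivalently, if $\rho=(\rho_i)_{i\in I}$ restricted to $X$ is not continuous at $x\in X$, then ${\cal E}_J(x)\ne\emptyset$.
   Context: $I$ is a finite set of players, $A_i$ finite nonempty action sets, $A=\prod_iA_i$, $r_i:A\to(0,1]$, $p:A\to[0,1]$. Let $\Xi=\prod_i\Delta(A_i)$; for $x\in\Xi$, $p(x)=\sum_ap(a)\prod_jx_j(a_j)$ and, if $p(x)>0$, $r_i(x)=\sum_ar_i(a)p(a)\prod_jx_j(a_j)/p(x)$ (also applied to partially pure profiles). $X:=\{x\in\Xi:p(x)=0\}$ is the set of nonabsorbing mixed action profiles. $\rho_i(x):=\max\{r_i(a_i,x_{-i}):a_i\in A_i,\ p(a_i,x_{-i})>0\}$, with $\max\emptyset=-\infty$ (so $\rho_i$ takes values in $\{-\infty\}\cup(0,1]$). For $x\in X$, a pair $(J,a_J)$ with $\emptyset\ne J\subseteq I$, $a_J\in\prod_{i\in J}A_i$ is an exit at $x$ if $p(a_J,x_{-J})>0$ and $p(a_{J'},x_{-J'})=0$ for every proper subset $J'\subsetneq J$; it is a joint exit if $|J|\ge2$; ${\cal E}_J(x)$ is the set of joint exits at $x$. *)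

From HB Require Import structures.
From mathcomp Require Import all_boot all_order all_algebra.
From mathcomp Require Import all_classical all_reals topology normedtype sequences.
Set Implicit Arguments. Unset Strict Implicit. Unset Printing Implicit Defensive.
Import Order.TTheory GRing.Theory Num.Theory numFieldNormedType.Exports.
Local Open Scope classical_set_scope.
Local Open Scope ring_scope.

Section Game.
Variables (R : realType) (I : finType) (A : I -> finType).

Definition profile := {dffun forall i : I, A i}.

Definition mprofile := forall i : I, A i -> R.

Definition is_mixed (x : mprofile) : Prop :=
  forall i, (forall a, 0 <= x i a) /\ \sum_(a : A i) x i a = 1.

Definition pmix (p : profile -> R) (x : mprofile) : R :=
  \sum_(a : profile) p a * \prod_(j : I) x j (a j).

Definition rmix (p : profile -> R) (ri : profile -> R) (x : mprofile) : R :=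
  (\sum_(a : profile) ri a * p a * \prod_(j : I) x j (a j)) / pmix p x.

Definition nonabs (p : profile -> R) (x : mprofile) : Prop :=
  is_mixed x /\ pmix p x = 0.

(* (a_i, x_{-i}) : player i plays pure action a, the others play x *)
Definition dev (i : I) (a : A i) (x : mprofile) : mprofile :=
  fun j b => if j == i then (Tagged (fun k => A k) b == Tagged (fun k => A k) a)%:R
             else x j b.

(* (a_J, x_{-J}) : players in J play the pure actions aJ j, others play x;
   the components of aJ outside J are irrelevant. *)
Definition mixJ (J : {set I}) (aJ : profile) (x : mprofile) : mprofile :=
  fun j b => if j \in J then (b == aJ j)%:R else x j b.

(* rho_i(x); None encodes -infinity (max over the empty set).  All candidate
   values are > 0, so the max with neutral element 0 is the true maximum. *)
Definition rho (p : profile -> R) (r : I -> profile -> R) (i : I) (x : mprofile)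
  : option R :=
  if [exists a : A i, 0 < pmix p (dev a x)] then
    Some (\big[Num.max/0]_(a : A i | 0 < pmix p (dev a x)) rmix p (r i) (dev a x))
  else None.

Definition is_exit (p : profile -> R) (x : mprofile) (J : {set I}) (aJ : profile)
  : Prop :=
  J != finset.set0 /\ 0 < pmix p (mixJ J aJ x) /\
  forall J' : {set I}, J' \proper J -> pmix p (mixJ J' aJ x) = 0.

Definition no_joint_exit (p : profile -> R) (x : mprofile) : Prop :=
  forall (J : {set I}) (aJ : profile), (2 <= #|J|)%N -> ~ is_exit p x J aJ.

End Game.

(* convergence in {-oo} u R, with -oo isolated: if the limit is -oo the
   sequence is eventually -oo; otherwise it is eventually finite and converges *)
Definition rho_cvg (R : realType) (u : nat -> option R) (l : option R) : Prop :=
  match l with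
  | None => \forall k \near \oo, u k = None
  | Some v => (\forall k \near \oo, u k != None) /\
              (fun k => odflt 0 (u k)) @ \oo --> v
  end.

From HB Require Import structures.
From mathcomp Require Import all_boot all_order all_algebra.
From mathcomp Require Import all_classical all_reals topology normedtype sequences.
Import Order.TTheory GRing.Theory Num.Theory numFieldNormedType.Exports.
Local Open Scope classical_set_scope.
Local Open Scope ring_scope.

Set Implicit Arguments.
Unset Strict Implicit.

(* The set {a | p(a, x_-i) > 0} over which rho_i takes its maximum is locally
   constant around x in X, and on it rho_i is a maximum of finitely many
   continuous functions.  A deviation with p(a, x_-i) > 0 keeps that property
   nearby by continuity.  If p(a, x_-i) = 0, let b be a pure profile with
   b_i = a and p(b) > 0.  A minimal set J of players with p(b_J, x_-J) > 0 is
   an exit at x; as there is no joint exit, J = {j}, and j <> i because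
   p(b_i, x_-i) = 0.  Near x still p(b_j, y_-j) > 0, and since
   y_j(b_j) p(b_j, y_-j) <= p(y) = 0 this forces y_j(b_j) = 0, so the term of
   b in p(a, y_-i) vanishes. *)

Lemma max_continuous (R : realType) :
  continuous (fun x : R * R => Num.max x.1 x.2).
Proof.
move=> x; apply: (continuous_max (f := fst) (g := snd)).
  exact: cvg_fst.
exact: cvg_snd.
Qed.

Section Profiles.
Context {R : realType} {I : finType} {A : I -> finType}.
Implicit Types (p ri : profile A -> R) (y z : mprofile R A) (b : profile A).

Definition nonneg_profile y := forall j c, 0 <= y j c.

Lemma mixed_nonneg y : is_mixed y -> nonneg_profile y.
Proof. by move=> hy j c; case: (hy j). Qed.

Lemma dev_nonneg y i (a : A i) : nonneg_profile y -> nonneg_profile (dev a y).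
Proof. by move=> hy j c; rewrite /dev; case: ifP. Qed.

Lemma mixJ_nonneg y J b : nonneg_profile y -> nonneg_profile (mixJ J b y).
Proof. by move=> hy j c; rewrite /mixJ; case: ifP. Qed.

Lemma mixJ_set0 y b : mixJ finset.set0 b y = y.
Proof.
by apply: functional_extensionality_dep => j; apply: funext => c; rewrite /mixJ inE.
Qed.

Lemma mixJ_set1 y b i : mixJ [set i]%SET b y = dev (b i) y.
Proof.
apply: functional_extensionality_dep => j; apply: funext => c.
rewrite /mixJ /dev inE; case: eqP => [ji|//]; subst j.
by rewrite eq_Tagged.
Qed.

Section Nonneg.
Variable p : profile A -> R.
Hypothesis p_ge0 : forall a, 0 <= p a.

Lemma pmix_ge0 y : nonneg_profile y -> 0 <= pmix p y.
Proof.
by move=> hy; apply: sumr_ge0 => a _; rewrite mulr_ge0 ?prodr_ge0.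
Qed.

Lemma pmix_term_le y b : nonneg_profile y -> p b * \prod_j y j (b j) <= pmix p y.
Proof.
move=> hy; rewrite /pmix (bigD1 b) //= lerDl.
by apply: sumr_ge0 => a _; rewrite mulr_ge0 ?prodr_ge0.
Qed.

Lemma mixJ1_weight_le y b j : nonneg_profile y ->
  y j (b j) * pmix p (mixJ [set j]%SET b y) <= pmix p y.
Proof.
move=> hy; rewrite /pmix mulr_sumr; apply: ler_sum => a _.
rewrite /mixJ (bigD1 j) //= [X in _ <= _ * X](bigD1 j) //= !inE eqxx.
under eq_bigr => l hl do rewrite inE (negbTE hl).
have [->|_] := eqVneq (a j) (b j); first by rewrite mul1r mulrCA.
by rewrite mul0r !mulr0 !mulr_ge0 ?prodr_ge0.
Qed.

Lemma nonabs_mixJ1_pos y b j :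
  nonabs p y -> 0 < pmix p (mixJ [set j]%SET b y) -> y j (b j) = 0.
Proof.
move=> [/mixed_nonneg hy hy0] hpos; apply/eqP.
have := mixJ1_weight_le b j hy; rewrite hy0 pmulr_lle0 // => hle.
by rewrite eq_le hle hy.
Qed.

Lemma exists_exit x J b : nonneg_profile x -> pmix p x = 0 ->
  0 < pmix p (mixJ J b x) -> exists J', is_exit p x J' b.
Proof.
move=> hx hx0 hJ.
have [J' /minsetP[hJ' minJ'] _] :=
  minset_exists (P := fun B => 0 < pmix p (mixJ B b x)) hJ.
exists J'; split; last split => // J'' ltJ''.
  by apply: contraTneq hJ' => ->; rewrite mixJ_set0 hx0 ltxx.
have := pmix_ge0 (mixJ_nonneg J'' b hx).
rewrite le_eqVlt => /orP[/eqP<-//|/minJ'/(_ (proper_sub ltJ'')) eqJ''].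
by rewrite eqJ'' fintype.properxx in ltJ''.
Qed.

Lemma null_dev_single_exit x b i : nonabs p x -> no_joint_exit p x ->
  pmix p (dev (b i) x) = 0 -> 0 < p b ->
  exists2 j, j != i & 0 < pmix p (mixJ [set j]%SET b x).
Proof.
move=> [/mixed_nonneg hx hx0] hE hi hb.
have hT : 0 < pmix p (mixJ [set: I]%SET b x).
  apply: lt_le_trans (pmix_term_le b (mixJ_nonneg [set: I]%SET b hx)).
  by rewrite big1 ?mulr1 // => j _; rewrite /mixJ inE eqxx.
have [J exJ] := exists_exit hx hx0 hT; have [nzJ [posJ _]] := exJ.
have /cards1P[j eJ] : #|J| == 1%N.
  by rewrite eqn_leq card_gt0 nzJ andbT leqNgt; apply/negP => /(hE J b).
exists j; last by rewrite -eJ.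
by apply: contraTneq posJ => eji; rewrite eJ eji mixJ_set1 hi ltxx.
Qed.

Lemma rho_dev_support_eq (r : I -> profile A -> R) i y z :
  (forall a : A i, (0 < pmix p (dev a y)) = (0 < pmix p (dev a z))) ->
  rho p r i y = if [exists a : A i, 0 < pmix p (dev a z)] then
    Some (\big[Num.max/0]_(a : A i | 0 < pmix p (dev a z)) rmix p (r i) (dev a y))
  else None.
Proof. by move=> eqyz; rewrite /rho (eq_existsb eqyz) (eq_bigl _ _ eqyz). Qed.

Section Limits.
Context {T : Type} (F : set_system T) {FF : Filter F}.
Implicit Type ys : T -> mprofile R A.

Definition pointwise_cvg ys z :=
  forall j c, ys t j c @[t --> F] --> z j c.

Lemma dev_pointwise_cvg ys z i (a : A i) :
  pointwise_cvg ys z -> pointwise_cvg (fun t => dev a (ys t)) (dev a z).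
Proof.
by move=> ysz j c; rewrite /dev; case: eqP => _; [exact: cvg_cst | exact: ysz].
Qed.

Lemma mixJ_pointwise_cvg ys z J b :
  pointwise_cvg ys z -> pointwise_cvg (fun t => mixJ J b (ys t)) (mixJ J b z).
Proof.
by move=> ysz j c; rewrite /mixJ; case: ifP => _; [exact: cvg_cst | exact: ysz].
Qed.

Lemma multilinear_cvg (w : profile A -> R) ys z : pointwise_cvg ys z ->
  (\sum_a w a * \prod_j ys t j (a j)) @[t --> F] --> \sum_a w a * \prod_j z j (a j).
Proof.
move=> ysz; apply: cvg_big => [|a _]; first exact: add_continuous.
apply: cvgM; first exact: cvg_cst.
by apply: cvg_big => [|j _]; [exact: mul_continuous | exact: ysz].
Qed.

Lemma pmix_cvg ys z : pointwise_cvg ys z -> pmix p (ys t) @[t --> F] --> pmix p z.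
Proof. exact: multilinear_cvg. Qed.

Lemma rmix_cvg ri ys z : pointwise_cvg ys z -> pmix p z != 0 ->
  rmix p ri (ys t) @[t --> F] --> rmix p ri z.
Proof.
move=> ysz hz; rewrite /rmix; apply: cvgM; last exact: cvgV hz (pmix_cvg ysz).
exact: (multilinear_cvg (w := fun a => ri a * p a) ysz).
Qed.

Lemma null_dev_eventually x ys i (a : A i) :
  nonabs p x -> no_joint_exit p x -> (forall t, nonabs p (ys t)) ->
  pointwise_cvg ys x ->
  pmix p (dev a x) = 0 -> \forall t \near F, pmix p (dev a (ys t)) = 0.
Proof.
move=> hx hE hys ysx hxa.
(* The parentheses stop [dev]'s implicit arguments from reaching into the
   unfolded [mprofile]. *)
suff hterm (b : profile A) :
    \forall t \near F, p b * \prod_(j : I) (dev a (ys t)) j (b j) = 0.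
  by apply: filterS _ (filter_forall _ hterm) => t ht; apply: big1 => b _.
have [bia|nbia] := eqVneq (b i) a; last first.
  apply: nearW => t.
  by rewrite (bigD1 i) //= /dev eqxx eq_Tagged (negbTE nbia) mul0r mulr0.
have [->|pb0] := eqVneq (p b) 0; first by apply: nearW => t; rewrite mul0r.
have pb : 0 < p b by rewrite lt_def pb0 p_ge0.
subst a; have [j nji hj] := null_dev_single_exit hx hE hxa pb.
near=> t; rewrite (bigD1 j) //= /dev (negbTE nji).
rewrite (nonabs_mixJ1_pos (hys t)) ?mul0r ?mulr0 //; near: t.
exact: cvgr_gt _ (pmix_cvg (mixJ_pointwise_cvg ysx)) _ hj.
Unshelve. all: by end_near.
Qed.

Lemma dev_support_eventually x ys i :
  nonabs p x -> no_joint_exit p x -> (forall t, nonabs p (ys t)) ->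
  pointwise_cvg ys x -> \forall t \near F,
    forall a : A i, (0 < pmix p (dev a (ys t))) = (0 < pmix p (dev a x)).
Proof.
move=> hx hE hys ysx; apply: filter_forall => a.
have [hxa|hxa_le] := ltP 0 (pmix p (dev a x)).
  have ysx_a := pmix_cvg (dev_pointwise_cvg (a := a) ysx).
  by apply: filterS _ (cvgr_gt _ ysx_a _ hxa) => t ->.
have hxa : pmix p (dev a x) = 0.
  apply: le_anti; rewrite hxa_le pmix_ge0 //.
  by apply/dev_nonneg/mixed_nonneg; case: hx.
by apply: filterS _ (null_dev_eventually hx hE hys ysx hxa) => t ->; rewrite ltxx.
Qed.

End Limits.
End Nonneg.
End Profiles.

Unset Implicit Arguments.

Theorem mainTheorem7 (R : realType) (I : finType) (A : I -> finType)
  (hA : forall i, (0 < #|A i|)%N)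
  (r : I -> profile A -> R) (p : profile A -> R)
  (hr : forall i a, 0 < r i a <= 1) (hp : forall a, 0 <= p a <= 1)
  (x : mprofile R A) (hx : nonabs p x) (hE : no_joint_exit p x)
  (xs : nat -> mprofile R A) (hxs : forall k, nonabs p (xs k))
  (hcvg : forall i (a : A i), (fun k => xs k i a) @ \oo --> x i a) :
  forall i : I, rho_cvg (fun k => rho p r i (xs k)) (rho p r i x).
Proof.
move=> i.
have p_ge0 a : 0 <= p a by case/andP: (hp a).
have hsupp :=
  dev_support_eventually p_ge0 (FF := eventually_filter) i hx hE hxs hcvg.
rewrite /rho_cvg.
rewrite [rho p r i x](rho_dev_support_eq r (y := x) (z := x) (fun=> erefl)).
pose M y := \big[Num.max/0]_(a : A i | 0 < pmix p (dev a x)) rmix p (r i) (dev a y).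
have hrho : \forall k \near \oo, rho p r i (xs k) =
    if [exists a : A i, 0 < pmix p (dev a x)] then Some (M (xs k)) else None.
  by near=> k; apply: rho_dev_support_eq; near: k.
case: ifP hrho => hex hrho //; split; first by near=> k; rewrite (near hrho k).
have hmax : M (xs k) @[k --> \oo] --> M x.
  apply: cvg_big => [|a ha]; first exact: max_continuous.
  exact: rmix_cvg (dev_pointwise_cvg hcvg) (lt0r_neq0 ha).
apply: cvg_trans _ hmax; apply: near_eq_cvg.
by near=> k; rewrite (near hrho k).
Unshelve. all: by end_near.
Qed.
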